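(* Let $(d_i)_{i\ge1}$ be an alternate Lyndon word with alternate Lyndon system $M$, and suppose the entropy of $M$ equals $\log\beta>0$. Then $\beta$ is the largest real solution $x$ of $$-\frac{x}{x+1}=\sum_{n\ge1}\frac{d_n}{(-x)^n}.$$
   Context: Alternate order: for two words $x=x_1x_2\cdots$, $y=y_1y_2\cdots$ over a finite alphabet of integers, $x\prec y$ iff there is $k$ with $x_i=y_i$ for all $i<k$ and $(-1)^k(x_k-y_k)<0$; $x\preceq y$ iff $x=y$ or $x\prec y$. An alternate Lyndon word is an infinite word $(d_i)_{i\ge1}$ over a finite alphabet $\{0,\dots,d_1\}$ with $d_1d_2\cdots\preceq d_nd_{n+1}\cdots$ for all $n\ge1$. Its alternate Lyndon system $M$ is the set of infinite words $x_1x_2\cdots$ with $d_1d_2\cdots\preceq x_kx_{k+1}\cdots$ for all $k\ge1$. The entropy of $M$ is $\lim_{n\to\infty}\frac1n\log H_n$, where $H_n$ is the number of words of length $n$ occurring as finite factors of elements of $M$. *)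

From Stdlib Require Import Reals Lra Lia ZArith List Arith Classical ClassicalDescription.
Import ListNotations.
Open Scope R_scope.

(* Infinite words over nat are functions nat -> nat; position i (0-indexed)
   holds the letter x_{i+1} of the paper. *)
Definition word := nat -> nat.

Definition shift (x : word) (n : nat) : word := fun i => x (n + i)%nat.

(* Alternate order: x < y iff there is k (1-indexed) with x_i = y_i for i<k and
   (-1)^k (x_k - y_k) < 0.  With 0-indexed j = k-1 this is (-1)^(j+1)(x j - y j) < 0. *)
Definition alt_lt (x y : word) : Prop :=
  exists j : nat,
    (forall i, (i < j)%nat -> x i = y i) /\
    ((-1) ^ (Z.of_nat (S j)) * (Z.of_nat (x j) - Z.of_nat (y j)) < 0)%Z.

Definition alt_le (x y : word) : Prop := (forall i, x i = y i) \/ alt_lt x y.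

Definition alt_lyndon (d : word) : Prop :=
  (forall i, (d i <= d 0%nat)%nat) /\ forall n, alt_le d (shift d n).

Definition in_system (d x : word) : Prop := forall k, alt_le d (shift x k).

Definition is_factor (d : word) (n : nat) (w : list nat) : Prop :=
  length w = n /\
  exists (x : word) (k : nat), in_system d x /\
    forall i, (i < n)%nat -> nth i w 0%nat = x (k + i)%nat.

Fixpoint words (n m : nat) : list (list nat) :=
  match n with
  | O => [ [] ]
  | S n' => flat_map (fun a => map (cons a) (words n' m)) (seq 0 (S m))
  end.

(* H_n: the number of words of length n occurring as factors of elements of M.
   (Elements of M only use letters in {0,...,d_1}, so enumerating words over
   that alphabet counts all factors.) *)
Definition factor_count (d : word) (n : nat) : nat :=
  length (filter (fun w => if excluded_middle_informative (is_factor d n w)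
                           then true else false) (words n (d 0%nat))).

(* x is a real solution of  -x/(x+1) = sum_{n>=1} d_n / (-x)^n
   (the series is required to converge; x <> 0, x <> -1 so both sides make sense). *)
Definition is_solution (d : word) (x : R) : Prop :=
  x <> 0 /\ x + 1 <> 0 /\
  infinite_sum (fun j => INR (d j) / (- x) ^ (S j)) (- x / (x + 1)).

(* A finite word is admissible when none of its suffixes is smaller than the
   corresponding prefix of d; admissible words are exactly the factors of M, so
   H_n counts them.  Sorting them by first letter, with L_j(m) the number of
   admissible words of length m below shift^j d, gives
   H_{m+1} = L_j(m+1) + d_j H_m + L_{j+1}(m) + 1 and L_0 = 0.  Unfolding this
   yields sum_k q_k H_{n-k} = 1, i.e. Q(z) H(z) = 1/(1-z) for
   Q(z) = 1 + (1+z) sum_j d_j (-z)^(j+1).  Submultiplicativity (Fekete) gives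
   H_n >= beta^n and the entropy makes H(z) converge for z < 1/beta, so
   0 < Q(z) <= (1 - beta z)/(1 - z) there; by continuity Q(1/beta) = 0, while Q
   has no root in (0, 1/beta).  Finally x > 1 solves the equation iff
   Q(1/x) = 0. *)

From Stdlib Require Import Reals Lra Lia ZArith List Arith Bool FunctionalExtensionality ClassicalDescription.
From Coquelicot Require Import Coquelicot.
Import ListNotations.

Local Open Scope nat_scope.

Fixpoint word_prefix (n : nat) (z : word) : list nat :=
  match n with O => [] | S n => z 0 :: word_prefix n (shift z 1) end.

(* [alt_ltb true u y]: the finite word [u] is smaller than [y] in the alternate
   order, at a position inside [u]; [alt_ltb false u y]: it is larger there.
   The flag flips at each letter because the order alternates. *)
Fixpoint alt_ltb (s : bool) (u : list nat) (y : word) : bool :=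
  match u with
  | [] => false
  | c :: u' => (if s then y 0 <? c else c <? y 0)
               || ((c =? y 0) && alt_ltb (negb s) u' (shift y 1))
  end.

Lemma shift_shift (z : word) a b : shift (shift z a) b = shift z (a + b).
Proof. apply functional_extensionality; intro i; unfold shift; f_equal; lia. Qed.

Lemma shift_0 (z : word) j : shift z j 0 = z j.
Proof. now unfold shift; rewrite Nat.add_0_r. Qed.

Lemma word_prefix_length n z : length (word_prefix n z) = n.
Proof. revert z; induction n; simpl; auto. Qed.

Lemma nth_word_prefix n z i : i < n -> nth i (word_prefix n z) 0 = z i.
Proof.
  revert z i; induction n; intros z i H; [lia|].
  destruct i; simpl; auto. rewrite IHn by lia. unfold shift; f_equal.
Qed.

Lemma in_word_prefix c n z : In c (word_prefix n z) -> exists i, c = z i.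
Proof.
  revert z; induction n; intros z H; simpl in H; [destruct H|].
  destruct H as [H|H]; [exists 0; auto|]. destruct (IHn _ H) as [i ->].
  exists (S i). reflexivity.
Qed.

Lemma word_prefix_nth w z :
  (forall i, i < length w -> nth i w 0 = z i) -> w = word_prefix (length w) z.
Proof.
  revert z; induction w as [|c w IH]; intros z H; simpl; auto.
  f_equal.
  - apply (H 0); simpl; lia.
  - apply IH. intros i Hi. apply (H (S i)). simpl; lia.
Qed.

Lemma alt_ltb_word_prefix s n y : alt_ltb s (word_prefix n y) y = false.
Proof.
  revert s y; induction n; intros s y; simpl; auto.
  rewrite Nat.eqb_refl, Nat.ltb_irrefl, IHn. now destruct s.
Qed.

Lemma alt_ltb_asym s u y : alt_ltb s u y = true -> alt_ltb (negb s) u y = false.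
Proof.
  revert s y; induction u as [|c u IH]; intros s y H; simpl in *; auto.
  destruct s; simpl in *;
  destruct (Nat.ltb_spec (y 0) c), (Nat.ltb_spec c (y 0)), (Nat.eqb_spec c (y 0));
    simpl in *; try lia; auto; apply IH in H; exact H.
Qed.

Lemma alt_ltb_trichotomy s u y :
  alt_ltb s u y = true \/ alt_ltb (negb s) u y = true \/ u = word_prefix (length u) y.
Proof.
  revert s y; induction u as [|c u IH]; intros s y; simpl; auto.
  destruct (lt_eq_lt_dec c (y 0)) as [[Hl|<-]|Hl].
  - replace (y 0 <? c) with false by (symmetry; apply Nat.ltb_ge; lia).
    replace (c <? y 0) with true by (symmetry; apply Nat.ltb_lt; lia).
    destruct s; auto.
  - rewrite Nat.ltb_irrefl, Nat.eqb_refl.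
    destruct (IH (negb s) (shift y 1)) as [H|[H|H]].
    + left. rewrite H. now destruct s.
    + right; left. rewrite H. now destruct s.
    + right; right. now rewrite <- H.
  - replace (y 0 <? c) with true by (symmetry; apply Nat.ltb_lt; lia).
    replace (c <? y 0) with false by (symmetry; apply Nat.ltb_ge; lia).
    destruct s; auto.
Qed.

Lemma alt_ltb_app s u v y : alt_ltb s u y = true -> alt_ltb s (u ++ v) y = true.
Proof.
  revert s y; induction u as [|c u IH]; intros s y H; simpl in *; [discriminate|].
  apply orb_true_iff in H as [H|H].
  - now rewrite H.
  - apply andb_true_iff in H as [-> H]. now rewrite IH, orb_true_r.
Qed.

Lemma alt_ltb_trans s u z w :
  (forall n, alt_ltb s (word_prefix n z) w = false) ->
  alt_ltb s u w = true -> alt_ltb s u z = true.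
Proof.
  revert s z w; induction u as [|c u IH]; intros s z w Hz H; simpl in *; [discriminate|].
  pose proof (Hz 1) as H1. simpl in H1. rewrite andb_false_r, orb_false_r in H1.
  apply orb_true_iff in H as [H|H].
  - destruct s; apply Nat.ltb_lt in H; apply Nat.ltb_ge in H1; simpl;
      apply orb_true_iff; left; apply Nat.ltb_lt; lia.
  - apply andb_true_iff in H as [He H]. apply Nat.eqb_eq in He as ->.
    destruct (Nat.eqb_spec (w 0) (z 0)) as [e|].
    + rewrite e, (IH (negb s) (shift z 1) (shift w 1)); [now destruct s; rewrite orb_true_r| |auto].
      intro n. specialize (Hz (S n)). simpl in Hz. rewrite e, Nat.eqb_refl in Hz.
      apply orb_false_iff in Hz as [_ Hz]. exact Hz.
    + destruct s; apply Nat.ltb_ge in H1; simpl; apply orb_true_iff; left;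
        apply Nat.ltb_lt; lia.
Qed.

Lemma alt_ltb_witness s n x y : alt_ltb s (word_prefix n x) y = true ->
  exists j, (forall i, i < j -> x i = y i) /\
    (if Bool.eqb s (Nat.even j) then y j < x j else x j < y j).
Proof.
  revert s x y; induction n; intros s x y H; simpl in H; [discriminate|].
  apply orb_true_iff in H as [H|H].
  - exists 0. split; [intros; lia|]. destruct s; apply Nat.ltb_lt in H; exact H.
  - apply andb_true_iff in H as [He H]. apply Nat.eqb_eq in He.
    destruct (IHn _ _ _ H) as [j [Hi Hc]].
    exists (S j). split.
    + intros [|i] Hi'; auto. apply (Hi i); lia.
    + rewrite Nat.even_succ, <- Nat.negb_even.
      destruct s, (Nat.even j); exact Hc.
Qed.

Lemma minus_one_pow j : ((-1) ^ Z.of_nat j = if Nat.even j then 1 else -1)%Z.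
Proof.
  induction j; [reflexivity|].
  rewrite Nat2Z.inj_succ, Z.pow_succ_r, IHj, Nat.even_succ, <- Nat.negb_even by lia.
  now destruct (Nat.even j).
Qed.

Lemma alt_ltb_true_alt_lt n x y : alt_ltb true (word_prefix n x) y = true -> alt_lt x y.
Proof.
  intro H. destruct (alt_ltb_witness _ _ _ _ H) as [j [Hi Hc]].
  exists j. split; auto. rewrite minus_one_pow, Nat.even_succ, <- Nat.negb_even.
  destruct (Nat.even j); cbn [negb Bool.eqb] in *; lia.
Qed.

Lemma alt_ltb_false_alt_lt n x y : alt_ltb false (word_prefix n x) y = true -> alt_lt y x.
Proof.
  intro H. destruct (alt_ltb_witness _ _ _ _ H) as [j [Hi Hc]].
  exists j. split; [intros i Hi'; symmetry; auto|].
  rewrite minus_one_pow, Nat.even_succ, <- Nat.negb_even.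
  destruct (Nat.even j); cbn [negb Bool.eqb] in *; lia.
Qed.

Lemma alt_lt_le_asym x y : alt_lt x y -> alt_le y x -> False.
Proof.
  intros [j [Hj Hc]] [Heq|[k [Hk Hc']]].
  - rewrite (Heq j), Z.sub_diag, Z.mul_0_r in Hc. lia.
  - destruct (lt_eq_lt_dec j k) as [[Hl|<-]|Hl].
    + rewrite (Hk j Hl), Z.sub_diag, Z.mul_0_r in Hc. lia.
    + set (p := ((-1) ^ Z.of_nat (S j))%Z) in *. nia.
    + rewrite (Hj k Hl), Z.sub_diag, Z.mul_0_r in Hc'. lia.
Qed.

Lemma alt_le_alt_ltb y z n : alt_le y z -> alt_ltb true (word_prefix n z) y = false.
Proof.
  intro H. destruct (alt_ltb true (word_prefix n z) y) eqn:E; auto.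
  exfalso. apply (alt_lt_le_asym z y); auto. eapply alt_ltb_true_alt_lt; eauto.
Qed.

Fixpoint admissible (d : word) (u : list nat) : bool :=
  match u with
  | [] => true
  | c :: u' => admissible d u' && negb (alt_ltb true (c :: u') d)
  end.

Lemma admissible_app_r d u v : admissible d (u ++ v) = true -> admissible d v = true.
Proof.
  induction u as [|c u IH]; simpl; auto. intro H. apply andb_true_iff in H. apply IH, H.
Qed.

Lemma admissible_app_l d u v : admissible d (u ++ v) = true -> admissible d u = true.
Proof.
  induction u as [|c u IH]; simpl; auto. intro H. apply andb_true_iff in H as [H1 H2].
  rewrite IH by auto. destruct (alt_ltb true (c :: u) d) eqn:E; [|simpl in E; now rewrite E].
  apply (alt_ltb_app _ _ v) in E. simpl in E, H2. rewrite E in H2. discriminate.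
Qed.

Lemma admissible_skipn d w k : admissible d w = true -> admissible d (skipn k w) = true.
Proof. intro H. rewrite <- (firstn_skipn k w) in H. eapply admissible_app_r; eauto. Qed.

Lemma admissible_not_alt_ltb d u : admissible d u = true -> alt_ltb true u d = false.
Proof.
  destruct u as [|c u]; simpl; auto. intro H. apply andb_true_iff in H as [_ H].
  now apply negb_true_iff in H.
Qed.

Lemma admissible_word_prefix_shift d j n :
  alt_lyndon d -> admissible d (word_prefix n (shift d j)) = true.
Proof.
  intros [_ HL]. revert j; induction n; intro j; auto.
  change (admissible d (word_prefix n (shift (shift d j) 1))
          && negb (alt_ltb true (word_prefix (S n) (shift d j)) d) = true).
  now rewrite (alt_le_alt_ltb d (shift d j) (S n) (HL j)), shift_shift, IHn.
Qed.

Lemma factor_admissible d n w : is_factor d n w -> admissible d w = true.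
Proof.
  intros [<- [x [k [Hx Hw]]]]. revert k Hw.
  induction w as [|c w IH]; intros k Hw; auto.
  change (admissible d w && negb (alt_ltb true (c :: w) d) = true).
  rewrite (IH (S k)).
  - rewrite (word_prefix_nth (c :: w) (shift x k)); [|intros i Hi; apply Hw, Hi].
    now rewrite (alt_le_alt_ltb d (shift x k)).
  - intros i Hi. replace (S k + i) with (k + S i) by lia. apply (Hw (S i)). simpl; lia.
Qed.

Fixpoint border (d : word) (w : list nat) (j : nat) : nat :=
  match j with
  | O => O
  | S j' => if list_eq_dec Nat.eq_dec (skipn (length w - S j') w) (word_prefix (S j') d)
            then S j' else border d w j'
  end.

Lemma border_le d w j : border d w j <= j.
Proof. induction j; simpl; auto. destruct list_eq_dec; lia. Qed.

Lemma border_spec d w j : j <= length w ->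
  skipn (length w - border d w j) w = word_prefix (border d w j) d.
Proof.
  induction j; intro Hj; simpl.
  - rewrite Nat.sub_0_r. apply skipn_all.
  - destruct list_eq_dec; auto. apply IHj; lia.
Qed.

Lemma border_max d w j i : border d w j < i <= j ->
  skipn (length w - i) w <> word_prefix i d.
Proof.
  induction j; intro Hi; simpl in *; [lia|].
  destruct list_eq_dec as [E|E]; [lia|].
  destruct (Nat.eq_dec i (S j)) as [->|]; auto. apply IHj; lia.
Qed.

(* An admissible [w] extends to an element of the system: after [w], continue
   with [d] from the longest border of [w], so that the suffixes of [w] longer
   than that border are strictly larger than [d] inside [w]. *)
Lemma admissible_factor d w :
  alt_lyndon d -> admissible d w = true -> is_factor d (length w) w.
Proof.
  intros Hd Hw. set (n := length w). set (J := border d w n).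
  assert (HJ : J <= n) by apply border_le.
  assert (HJw : skipn (n - J) w = word_prefix J d) by (apply border_spec; lia).
  set (x := fun i => if i <? n then nth i w 0 else d (J + (i - n))).
  split; auto. exists x, 0. split.
  - intro k. destruct (le_lt_dec (n - J) k) as [Hk|Hk].
    + replace (shift x k) with (shift d (k - (n - J))); [apply (proj2 Hd)|].
      apply functional_extensionality; intro i. unfold shift, x.
      destruct (Nat.ltb_spec (k + i) n); [|f_equal; lia].
      replace (k + i) with ((n - J) + (k + i - (n - J))) by lia.
      rewrite <- nth_skipn, HJw, nth_word_prefix by lia. f_equal; lia.
    + right. set (u := skipn k w).
      assert (Hul : length u = n - k) by (unfold u; rewrite length_skipn; auto).
      assert (Hu : u = word_prefix (n - k) (shift x k)).
      { rewrite <- Hul. apply word_prefix_nth. intros i Hi. unfold u, shift, x.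
        rewrite nth_skipn. destruct (Nat.ltb_spec (k + i) n); [f_equal; lia|lia]. }
      destruct (alt_ltb_trichotomy true u d) as [H|[H|H]].
      * rewrite admissible_not_alt_ltb in H by (apply admissible_skipn; auto). discriminate.
      * rewrite Hu in H. eapply alt_ltb_false_alt_lt; eauto.
      * exfalso. rewrite Hul in H. apply (border_max d w n (n - k)); [fold J; lia|].
        fold n. now replace (n - (n - k)) with k by lia.
  - intros i Hi. unfold x. simpl. destruct (Nat.ltb_spec i n); auto; lia.
Qed.

Lemma words_S n m :
  words (S n) m = flat_map (fun a => map (cons a) (words n m)) (seq 0 (S m)).
Proof. reflexivity. Qed.

Lemma length_words n m w : In w (words n m) -> length w = n.
Proof.
  revert w; induction n; intros w H.
  - destruct H as [<-|[]]. reflexivity.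
  - rewrite words_S in H. apply in_flat_map in H as [c [_ H]]. apply in_map_iff in H as [u [<- H]].
    simpl. f_equal; auto.
Qed.

Lemma in_words n m w : length w = n -> (forall c, In c w -> c <= m) -> In w (words n m).
Proof.
  revert w; induction n; intros [|c w] Hl Hc; try discriminate.
  - now left.
  - rewrite words_S. apply in_flat_map. exists c. split.
    + apply in_seq. specialize (Hc c (or_introl eq_refl)). lia.
    + apply in_map, IHn; [simpl in Hl; lia|]. intros c' H'. apply Hc. now right.
Qed.

Lemma NoDup_words n m : NoDup (words n m).
Proof.
  induction n; [repeat constructor; intros []|].
  rewrite words_S. generalize (seq_NoDup (S m) 0). induction (seq 0 (S m)) as [|c l IHl];
    intro Hl; simpl; [constructor|]. inversion_clear Hl as [|? ? Hc Hl'].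
  apply NoDup_app; auto.
  - apply NoDup_map_NoDup_ForallPairs; auto. intros u v _ _ E. now injection E.
  - intros w Hw Hw'. apply in_map_iff in Hw as [u [<- _]].
    apply in_flat_map in Hw' as [c' [Hc' Hw']]. apply in_map_iff in Hw' as [v [E _]].
    injection E as -> _. contradiction.
Qed.

Lemma words_add m n a :
  words (m + n) a = flat_map (fun u => map (fun v => u ++ v) (words n a)) (words m a).
Proof.
  induction m as [|m IHm]; [simpl; now rewrite app_nil_r, map_id|].
  change (S m + n) with (S (m + n)). rewrite !words_S, IHm. clear IHm.
  induction (seq 0 (S a)) as [|c l IHl]; simpl; auto.
  rewrite flat_map_app, <- IHl. f_equal. clear IHl.
  induction (words m a) as [|u w IHw]; simpl; auto.
  now rewrite map_app, IHw, map_map.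
Qed.

Lemma length_filter_flat_map {A B} (P : B -> bool) (f : A -> list B) l :
  length (filter P (flat_map f l)) = list_sum (map (fun x => length (filter P (f x))) l).
Proof. induction l; simpl; auto. now rewrite filter_app, length_app, IHl. Qed.

Lemma length_filter_map {A B} (P : B -> bool) (f : A -> B) l :
  length (filter P (map f l)) = length (filter (fun x => P (f x)) l).
Proof. induction l as [|a l IH]; simpl; auto. destruct (P (f a)); simpl; auto. Qed.

Lemma length_filter_split {A} (P Q : A -> bool) l :
  length (filter P l) =
  length (filter (fun x => P x && Q x) l) + length (filter (fun x => P x && negb (Q x)) l).
Proof. induction l as [|a l IH]; simpl; auto. destruct (P a), (Q a); simpl; rewrite IH; lia. Qed.

Lemma length_filter_le {A} (P Q : A -> bool) l :
  (forall x, In x l -> P x = true -> Q x = true) ->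
  length (filter P l) <= length (filter Q l).
Proof.
  induction l as [|a l IH]; simpl; intros H; auto.
  destruct (P a) eqn:E.
  - rewrite (H a (or_introl eq_refl) E). simpl. apply le_n_S, IH. auto.
  - destruct (Q a); simpl; [apply le_S|]; apply IH; auto.
Qed.

Lemma length_filter_singleton {A} (eqd : forall x y : A, {x = y} + {x <> y}) l p :
  NoDup l -> In p l -> length (filter (fun x => if eqd x p then true else false) l) = 1.
Proof.
  intros Hl Hp. rewrite <- (proj1 (NoDup_count_occ' eqd l) Hl p Hp).
  induction l as [|x l IH]; simpl; auto.
  destruct (eqd x p) as [->|], (eqd p p) as [|]; try congruence; simpl.
  - f_equal. clear IH Hp. inversion_clear Hl as [|? ? Hx _]. induction l as [|y l IHl]; auto.
    simpl. destruct (eqd y p) as [->|]; [now destruct Hx; left|].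
    destruct (eqd p y); [congruence|]. apply IHl. intro; apply Hx; now right.
  - inversion_clear Hl. apply IH; auto. destruct Hp; congruence.
Qed.

Definition count_words (d : word) (m : nat) (P : list nat -> bool) : nat :=
  length (filter P (words m (d 0))).

Definition nadm d m := count_words d m (admissible d).
Definition nadm_lt d y m := count_words d m (fun v => admissible d v && alt_ltb true v y).
Definition nadm_gt d y m := count_words d m (fun v => admissible d v && alt_ltb false v y).

Lemma count_words_S d m P : count_words d (S m) P =
  list_sum (map (fun c => count_words d m (fun u => P (c :: u))) (seq 0 (S (d 0)))).
Proof.
  unfold count_words. rewrite words_S, length_filter_flat_map. f_equal. apply map_ext.
  intro c. apply length_filter_map.
Qed.

Lemma count_words_ext d m P Q :
  (forall u, length u = m -> P u = Q u) -> count_words d m P = count_words d m Q.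
Proof.
  intro H. unfold count_words. f_equal. apply filter_ext_in. intros x Hx.
  apply H. eapply length_words; eauto.
Qed.

Lemma count_words_split d m P Q : count_words d m P =
  count_words d m (fun x => P x && Q x) + count_words d m (fun x => P x && negb (Q x)).
Proof. apply length_filter_split. Qed.

Lemma factor_count_nadm d m : alt_lyndon d -> factor_count d m = nadm d m.
Proof.
  intro Hd. unfold factor_count, nadm, count_words. f_equal. apply filter_ext_in. intros w Hw.
  destruct (excluded_middle_informative (is_factor d m w)) as [H|H].
  - symmetry. eapply factor_admissible; eauto.
  - destruct (admissible d w) eqn:E; auto. exfalso. apply H.
    rewrite <- (length_words _ _ _ Hw). now apply admissible_factor.
Qed.

Lemma word_prefix_in_words d j m :
  alt_lyndon d -> In (word_prefix m (shift d j)) (words m (d 0)).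
Proof.
  intro Hd. apply in_words; [apply word_prefix_length|]. intros c Hc.
  destruct (in_word_prefix _ _ _ Hc) as [i ->]. apply (proj1 Hd).
Qed.

Lemma nadm_pos d m : alt_lyndon d -> 1 <= nadm d m.
Proof.
  intro Hd. unfold nadm, count_words.
  assert (H : In (word_prefix m (shift d 0)) (filter (admissible d) (words m (d 0)))).
  { apply filter_In. split; [apply word_prefix_in_words|apply admissible_word_prefix_shift]; auto. }
  destruct (filter (admissible d) (words m (d 0))); [destruct H|simpl; lia].
Qed.

(* Both halves of an admissible word are admissible. *)
Lemma nadm_add d m n : nadm d (m + n) <= nadm d m * nadm d n.
Proof.
  unfold nadm, count_words. rewrite words_add, length_filter_flat_map.
  induction (words m (d 0)) as [|u l IH]; simpl; auto.
  rewrite length_filter_map. destruct (admissible d u) eqn:E; simpl.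
  - apply Nat.add_le_mono; auto. apply length_filter_le. intros v _.
    apply admissible_app_r.
  - rewrite (filter_ext_in _ (fun _ => false)); [rewrite filter_false; simpl; auto|].
    intros v _. destruct (admissible d (u ++ v)) eqn:E2; auto.
    apply admissible_app_l in E2. congruence.
Qed.

Lemma nadm_lt_self d m : nadm_lt d (shift d 0) m = 0.
Proof.
  unfold nadm_lt, count_words. rewrite (filter_ext_in _ (fun _ => false)).
  - now rewrite filter_false.
  - intros u _. destruct (admissible d u) eqn:E; auto.
    exact (admissible_not_alt_ltb d u E).
Qed.

Lemma nadm_split d j m : alt_lyndon d ->
  nadm d m = nadm_lt d (shift d j) m + nadm_gt d (shift d j) m + 1.
Proof.
  intro Hd. set (y := shift d j). set (p := word_prefix m y). unfold nadm, nadm_gt.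
  rewrite (count_words_split d m (admissible d) (fun v => alt_ltb true v y)).
  rewrite (count_words_split d m (fun x => admissible d x && negb (alt_ltb true x y))
                             (fun v => alt_ltb false v y)); cbv beta.
  rewrite (count_words_ext d m (fun x => admissible d x && negb (alt_ltb true x y) && alt_ltb false x y)
                             (fun v => admissible d v && alt_ltb false v y)).
  2:{ intros u _. destruct (alt_ltb false u y) eqn:E.
      - apply alt_ltb_asym in E. simpl in E. now rewrite E, andb_true_r.
      - now rewrite !andb_false_r. }
  rewrite (count_words_ext d m (fun x => admissible d x && negb (alt_ltb true x y) && negb (alt_ltb false x y))
                             (fun v => if list_eq_dec Nat.eq_dec v p then true else false)).
  2:{ intros u Hu. destruct (list_eq_dec Nat.eq_dec u p) as [->|E].
      - unfold p, y. now rewrite !alt_ltb_word_prefix, admissible_word_prefix_shift.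
      - destruct (alt_ltb_trichotomy true u y) as [H|[H|H]].
        + now rewrite H, andb_false_r.
        + simpl in H. now rewrite H, andb_false_r.
        + exfalso. apply E. now rewrite H, Hu. }
  unfold count_words at 3. rewrite (length_filter_singleton (list_eq_dec Nat.eq_dec)).
  - unfold nadm_lt. lia.
  - apply NoDup_words.
  - now apply word_prefix_in_words.
Qed.

Lemma list_sum_map_const {A} (f : A -> nat) l k :
  (forall x, In x l -> f x = k) -> list_sum (map f l) = length l * k.
Proof.
  induction l as [|x l IH]; intro H; simpl; auto.
  rewrite (H x (or_introl eq_refl)), IH; [lia|]. intros y Hy. apply H. now right.
Qed.

Lemma admissible_cons_lt d c u : c < d 0 -> admissible d (c :: u) = admissible d u.
Proof.
  intro Hc. simpl. replace (d 0 <? c) with false by (symmetry; apply Nat.ltb_ge; lia).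
  replace (c =? d 0) with false by (symmetry; apply Nat.eqb_neq; lia).
  apply andb_true_r.
Qed.

Lemma count_not_gt d j m : alt_lyndon d ->
  count_words d m (fun u => admissible d u && negb (alt_ltb false u (shift d j)))
  = nadm_lt d (shift d j) m + 1.
Proof.
  intro Hd. pose proof (nadm_split d j m Hd) as E. unfold nadm, nadm_gt in E.
  rewrite (count_words_split d m _ (fun u => alt_ltb false u (shift d j))) in E. lia.
Qed.

(* The Lyndon property at [j] makes [shift d (S j)] no larger than [shift d 1]
   when [d j = d 0], so that a word beyond [shift d 1] is beyond [shift d (S j)]. *)
Lemma admissible_cons_letter d j u : alt_lyndon d ->
  admissible d (d j :: u) && negb (alt_ltb false u (shift d (S j)))
  = admissible d u && negb (alt_ltb false u (shift d (S j))).
Proof.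
  intro Hd. destruct (Nat.eq_dec (d j) (d 0)) as [E|Ne].
  - simpl. rewrite E, Nat.ltb_irrefl, Nat.eqb_refl. simpl.
    destruct (alt_ltb false u (shift d 1)) eqn:H1; [|now rewrite andb_true_r].
    replace (alt_ltb false u (shift d (S j))) with true; [now rewrite !andb_false_r|].
    symmetry. apply (alt_ltb_trans false u (shift d (S j)) (shift d 1)); auto.
    intro n. pose proof (alt_le_alt_ltb d (shift d j) (S n) (proj2 Hd j)) as H.
    simpl in H. rewrite !shift_0, E, Nat.ltb_irrefl, Nat.eqb_refl, shift_shift in H.
    now rewrite Nat.add_1_r in H.
  - rewrite admissible_cons_lt; auto. pose proof (proj1 Hd j). lia.
Qed.

(* Sort by the first letter [c]: for [c < d j] any admissible tail works, for
   [c = d j] the tail must not lie beyond [shift d (S j)], for [c > d j] none. *)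
Lemma nadm_not_lt_S d j m : alt_lyndon d ->
  count_words d (S m) (fun v => admissible d v && negb (alt_ltb true v (shift d j)))
  = d j * nadm d m + nadm_lt d (shift d (S j)) m + 1.
Proof.
  intro Hd. set (e := d j). assert (He : e <= d 0) by apply (proj1 Hd).
  rewrite count_words_S. replace (S (d 0)) with (e + S (d 0 - e)) by lia.
  rewrite seq_app, Nat.add_0_l, <- cons_seq, map_app, list_sum_app. cbn [map list_sum fold_right].
  rewrite (list_sum_map_const _ (seq 0 e) (nadm d m)),
          (list_sum_map_const _ (seq (S e) _) 0), length_seq.
  - pose proof (count_not_gt d (S j) m Hd).
    enough (count_words d m (fun u => admissible d (e :: u)
              && negb (alt_ltb true (e :: u) (shift d j)))
            = count_words d m (fun u => admissible d u && negb (alt_ltb false u (shift d (S j)))))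
      by lia.
    apply count_words_ext. intros u _. cbn [alt_ltb]. rewrite shift_0, shift_shift.
    fold e. rewrite Nat.ltb_irrefl, Nat.eqb_refl, Nat.add_1_r. apply admissible_cons_letter; auto.
  - intros c Hc. apply in_seq in Hc. unfold count_words. rewrite (filter_ext_in _ (fun _ => false)).
    + now rewrite filter_false.
    + intros u _. cbn [alt_ltb]. rewrite shift_0. fold e.
      replace (e <? c) with true by (symmetry; apply Nat.ltb_lt; lia).
      now rewrite andb_false_r.
  - intros c Hc. apply in_seq in Hc. apply count_words_ext. intros u _.
    cbn [alt_ltb]. rewrite shift_0. fold e.
    replace (e <? c) with false by (symmetry; apply Nat.ltb_ge; lia).
    replace (c =? e) with false by (symmetry; apply Nat.eqb_neq; lia).
    rewrite admissible_cons_lt by lia. now rewrite andb_true_r.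
Qed.

Lemma nadm_S d j m : alt_lyndon d ->
  nadm d (S m) = nadm_lt d (shift d j) (S m) + d j * nadm d m + nadm_lt d (shift d (S j)) m + 1.
Proof.
  intro Hd. unfold nadm at 1.
  rewrite (count_words_split d (S m) _ (fun v => alt_ltb true v (shift d j))), nadm_not_lt_S by auto.
  unfold nadm_lt. lia.
Qed.

Local Open Scope R_scope.

Fixpoint sum_below (f : nat -> R) (n : nat) : R :=
  match n with O => 0 | S n => sum_below f n + f n end.

Lemma sum_below_S_first f n : sum_below f (S n) = f 0%nat + sum_below (fun i => f (S i)) n.
Proof. induction n; simpl in *; [lra|]. rewrite IHn. lra. Qed.

Lemma sum_below_ext f g n :
  (forall i, (i < n)%nat -> f i = g i) -> sum_below f n = sum_below g n.
Proof. induction n; intro H; simpl; auto. rewrite IHn, H; auto. Qed.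

Lemma sum_below_opp f n : sum_below (fun i => - f i) n = - sum_below f n.
Proof. induction n; simpl; [lra|]. rewrite IHn; lra. Qed.

Lemma sum_below_plus f g n : sum_below (fun i => f i + g i) n = sum_below f n + sum_below g n.
Proof. induction n; simpl; [lra|]. rewrite IHn; lra. Qed.

Lemma sum_f_R0_sum_below f n : sum_f_R0 f n = sum_below f (S n).
Proof. induction n; simpl in *; [lra|]. now rewrite IHn. Qed.

(* Coefficients of [1 + (1 + z) * sum_j a_j (-z)^(j+1)]. *)
Definition char_coef (a : nat -> R) (n : nat) : R :=
  match n with
  | O => 1
  | S O => - a 0%nat
  | S (S k) => (-1) ^ k * (a (S k) - a k)
  end.

Section ConvolutionIdentity.

Variables (h a : nat -> R) (L : nat -> nat -> R).
Hypothesis h_0 : h 0%nat = 1.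
Hypothesis L_0 : forall j, L j 0%nat = 0.
Hypothesis L_S : forall j m, L j (S m) = h (S m) - a j * h m - 1 - L (S j) m.
Hypothesis L_self : forall m, L 0%nat m = 0.

Let defect m := sum_below (fun i => (-1) ^ i * (h (m - i) - a i * h (m - 1 - i) - 1)) m.

Lemma L_closed_form m : forall j,
  L j m = sum_below (fun i => (-1) ^ i * (h (m - i) - a (j + i) * h (m - 1 - i) - 1)) m.
Proof.
  induction m as [|m IHm]; intro j; [apply L_0|].
  rewrite L_S, IHm, sum_below_S_first.
  match goal with |- _ = _ + sum_below ?f m =>
    rewrite (sum_below_ext f (fun i => - ((-1) ^ i *
               (h (m - i) - a (S j + i) * h (m - 1 - i) - 1)))), sum_below_opp end.
  - simpl. rewrite !Nat.sub_0_r, Nat.add_0_r. ring.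
  - intros i Hi. replace (j + S i)%nat with (S j + i)%nat by lia.
    replace (S m - S i)%nat with (m - i)%nat by lia.
    replace (S m - 1 - S i)%nat with (m - 1 - i)%nat by lia. simpl. ring.
Qed.

Lemma defect_0 m : defect m = 0.
Proof. rewrite <- (L_self m), L_closed_form. reflexivity. Qed.

Lemma convolution_defect n :
  sum_f_R0 (fun k => char_coef a k * h (S n - k)) (S n) = 1 + defect (S n) + defect n.
Proof.
  unfold defect. rewrite sum_f_R0_sum_below, !sum_below_S_first.
  match goal with |- _ + (_ + sum_below ?f n) = _ + (_ + sum_below ?g n) + sum_below ?k n =>
    rewrite (sum_below_ext f (fun i => g i + k i)), sum_below_plus end.
  - simpl. rewrite !Nat.sub_0_r. ring.
  - intros i Hi. simpl char_coef.
    replace (S n - S (S i))%nat with (n - 1 - i)%nat by lia.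
    replace (S n - S i)%nat with (n - i)%nat by lia.
    replace (S n - 1 - S i)%nat with (n - 1 - i)%nat by lia. simpl. ring.
Qed.

Lemma convolution_identity n : sum_f_R0 (fun k => char_coef a k * h (n - k)) n = 1.
Proof.
  destruct n as [|n].
  - simpl. rewrite h_0. ring.
  - now rewrite convolution_defect, !defect_0, !Rplus_0_r.
Qed.

End ConvolutionIdentity.

Definition letter (d : word) (i : nat) : R := INR (d i).

Lemma nadm_convolution d n : alt_lyndon d ->
  sum_f_R0 (fun k => char_coef (letter d) k * INR (nadm d (n - k))) n = 1.
Proof.
  intro Hd. apply (convolution_identity (fun m => INR (nadm d m)) (letter d)
                   (fun j m => INR (nadm_lt d (shift d j) m))).
  - reflexivity.
  - reflexivity.
  - intros j m. rewrite (nadm_S d j m Hd), !plus_INR, mult_INR. unfold letter. simpl. lra.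
  - intro m. now rewrite nadm_lt_self.
Qed.

Lemma ln_pos_gt_1 b : 0 < ln b -> 1 < b.
Proof.
  intro H. destruct (Rlt_le_dec 0 b) as [Hb|Hb].
  - rewrite <- (exp_ln b Hb), <- exp_0. apply exp_increasing. lra.
  - exfalso. unfold ln in H. destruct (Rlt_dec 0 b); lra.
Qed.

Lemma exp_INR_mul k c : exp (INR k * c) = exp c ^ k.
Proof.
  induction k; [now rewrite Rmult_0_l, exp_0|].
  rewrite S_INR, Rmult_plus_distr_r, Rmult_1_l, exp_plus, IHk. simpl. ring.
Qed.

Lemma inv_bounds_gt_1 b : 1 < b -> 0 < / b < 1.
Proof.
  intro Hb. split; [apply Rinv_0_lt_compat; lra|].
  rewrite <- Rinv_1. apply Rinv_lt_contravar; lra.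
Qed.

Lemma one_sub_mul_pos b z : 0 < b -> 0 < z < / b -> 0 < 1 - b * z.
Proof.
  intros Hb [_ Hz]. apply (Rmult_lt_compat_l b) in Hz; [|lra].
  rewrite Rinv_r in Hz by lra. lra.
Qed.

Section ExponentialGrowth.

Variables (h : nat -> R) (b : R).
Hypothesis h_ge_1 : forall n, 1 <= h n.
Hypothesis h_rate : Un_cv (fun n => ln (h (S n)) / INR (S n)) (ln b).

Lemma submult_pow (h_submult : forall m n, h (m + n)%nat <= h m * h n) k n :
  h (S k * n)%nat <= h n ^ S k.
Proof.
  induction k.
  - simpl. rewrite Nat.add_0_r. lra.
  - replace (S (S k) * n)%nat with (n + S k * n)%nat by lia.
    eapply Rle_trans; [apply h_submult|]. simpl (h n ^ S (S k)).
    apply Rmult_le_compat_l; [specialize (h_ge_1 n); lra|]. apply IHk.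
Qed.

(* Fekete: along the multiples of [n], [ln (h m) / m] stays below [ln (h n) / n]. *)
Lemma submult_rate_le (h_submult : forall m n, h (m + n)%nat <= h m * h n) n :
  (0 < n)%nat -> ln b <= ln (h n) / INR n.
Proof.
  intro Hn. destruct (Rle_dec (ln b) (ln (h n) / INR n)) as [H|H]; auto. exfalso.
  apply Rnot_le_lt in H. set (c := ln (h n) / INR n) in *.
  destruct (h_rate (ln b - c)) as [N HN]; [lra|].
  specialize (HN (S N * n - 1)%nat ltac:(nia)). unfold R_dist in HN.
  replace (S (S N * n - 1)) with (S N * n)%nat in HN by nia.
  assert (Hle : ln (h (S N * n)%nat) / INR (S N * n) <= c).
  { unfold c. rewrite mult_INR.
    assert (Hl : ln (h (S N * n)%nat) <= INR (S N) * ln (h n)).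
    { rewrite <- ln_pow by (specialize (h_ge_1 n); lra). apply ln_le.
      - specialize (h_ge_1 (S N * n)%nat); lra.
      - now apply submult_pow. }
    assert (0 < INR (S N)) by (apply lt_0_INR; lia).
    assert (0 < INR n) by (apply lt_0_INR; lia).
    apply (Rmult_le_reg_r (INR (S N) * INR n)); [nra|].
    field_simplify; lra. }
  apply Rabs_def2 in HN. lra.
Qed.

Lemma submult_pow_le (h_submult : forall m n, h (m + n)%nat <= h m * h n) n :
  0 < b -> b ^ n <= h n.
Proof.
  intro Hb. destruct n as [|n]; [simpl; apply h_ge_1|].
  pose proof (submult_rate_le h_submult (S n) ltac:(lia)) as H.
  assert (0 < INR (S n)) by (apply lt_0_INR; lia).
  apply Rnot_lt_le. intro Hn. pose proof (h_ge_1 (S n)).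
  apply ln_increasing in Hn; [|lra]. rewrite ln_pow in Hn by lra.
  apply (Rmult_le_compat_r (INR (S n))) in H; [|lra].
  unfold Rdiv in H. rewrite Rmult_assoc, Rinv_l in H by lra. lra.
Qed.

Lemma ex_series_rate z : 0 < b -> 0 < z < / b -> ex_series (fun n => h n * z ^ n).
Proof.
  intros Hb Hz. pose proof (one_sub_mul_pos b z Hb Hz). destruct Hz as [Hz _].
  assert (Hl : ln (z * b) < 0) by (rewrite <- ln_1; apply ln_increasing; nra).
  set (eps := - ln (z * b) / 2).
  destruct (h_rate eps) as [N HN]; [unfold eps; lra|].
  set (rho := exp (ln (z * b) + eps)).
  assert (Hrho : 0 < rho < 1).
  { unfold rho. split; [apply exp_pos|]. rewrite <- exp_0. apply exp_increasing. unfold eps. lra. }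
  apply (ex_series_incr_n _ (S N)).
  apply (ex_series_le (V := R_CompleteNormedModule) _ (fun k => rho ^ (S N + k))).
  - intro k. set (n := (N + k)%nat). replace (S N + k)%nat with (S n) by (unfold n; lia).
    specialize (HN n ltac:(unfold n; lia)). unfold R_dist in HN. apply Rabs_def2 in HN as [HN _].
    assert (0 < INR (S n)) by (apply lt_0_INR; lia).
    assert (Hln : ln (h (S n)) < INR (S n) * (ln b + eps)).
    { apply (Rmult_lt_compat_r (INR (S n))) in HN; [|lra].
      replace (ln (h (S n))) with (ln (h (S n)) / INR (S n) * INR (S n)) by (field; lra). nra. }
    assert (Hhp : 0 < h (S n)) by (specialize (h_ge_1 (S n)); lra).
    change (Rabs (h (S n) * z ^ S n) <= rho ^ S n).
    rewrite Rabs_pos_eq by (apply Rmult_le_pos; [lra|apply pow_le; lra]).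
    rewrite <- (exp_ln (h (S n))), <- (exp_ln z), <- exp_INR_mul, <- exp_plus by auto.
    unfold rho. rewrite <- exp_INR_mul, ln_mult by lra. apply Rlt_le, exp_increasing. nra.
  - apply (ex_series_incr_n (fun k => rho ^ k) (S N)), ex_series_geom.
    rewrite Rabs_pos_eq; lra.
Qed.

End ExponentialGrowth.

Lemma continuity_pt_vanish f r C : 0 < r -> continuity_pt f r ->
  (forall z, 0 < z < r -> Rabs (f z) <= C * (r - z)) -> f r = 0.
Proof.
  intros Hr Hf Hbound. destruct (Req_dec (f r) 0) as [|Hne]; auto. exfalso.
  set (e := Rabs (f r) / 2).
  assert (He : 0 < e) by (apply Rabs_pos_lt in Hne; unfold e; lra).
  destruct (Hf e He) as [del [Hdel Hcl]].
  set (t := Rmin (Rmin (del / 2) (r / 2)) (e / (Rabs C + 1))).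
  assert (Ht : 0 < t) by (repeat apply Rmin_pos; try lra;
                          apply Rdiv_lt_0_compat; [lra|pose proof (Rabs_pos C); lra]).
  assert (Htdel : t <= del / 2) by (unfold t; eapply Rle_trans; apply Rmin_l).
  assert (Htr : t <= r / 2) by (unfold t; eapply Rle_trans; [apply Rmin_l|apply Rmin_r]).
  assert (HtC : Rabs C * t < e).
  { assert (t * (Rabs C + 1) <= e).
    { apply (Rmult_le_reg_r (/ (Rabs C + 1))); [apply Rinv_0_lt_compat; pose proof (Rabs_pos C); lra|].
      rewrite Rmult_assoc, Rinv_r by (pose proof (Rabs_pos C); lra). rewrite Rmult_1_r. apply Rmin_r. }
    nra. }
  specialize (Hcl (r - t)). simpl in Hcl. unfold R_dist in Hcl.
  assert (Hnear : Rabs (f (r - t) - f r) < e).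
  { apply Hcl. split; [split; [exact I|lra]|].
    replace (r - t - r) with (- t) by ring. rewrite Rabs_Ropp, Rabs_pos_eq; lra. }
  assert (Hsmall : Rabs (f (r - t)) < e).
  { eapply Rle_lt_trans; [apply (Hbound (r - t)); lra|].
    replace (r - (r - t)) with t by ring. eapply Rle_lt_trans; [|exact HtC].
    apply Rmult_le_compat_r; [lra|apply Rle_abs]. }
  pose proof (Rabs_triang (f (r - t)) (f r - f (r - t))) as Htri.
  rewrite <- Rabs_Ropp in Hnear. replace (- (f (r - t) - f r)) with (f r - f (r - t)) in Hnear by ring.
  replace (f (r - t) + (f r - f (r - t))) with (f r) in Htri by ring. unfold e in *. lra.
Qed.

Lemma CV_radius_ge_1 q C : (forall n, Rabs (q n) <= C) -> Rbar_le 1 (CV_radius q).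
Proof.
  intro Hq. apply (proj1 (CV_radius_bounded q)). exists C. intro n.
  now rewrite pow1, Rmult_1_r.
Qed.

Section GeneratingFunction.

Variables (q h : nat -> R) (b C : R).
Hypothesis b_gt_1 : 1 < b.
Hypothesis q_bounded : forall n, Rabs (q n) <= C.
Hypothesis h_lower : forall n, b ^ n <= h n.
Hypothesis h_series : forall z, 0 < z < / b -> ex_series (fun n => h n * z ^ n).
Hypothesis convolution : forall n, sum_f_R0 (fun k => q k * h (n - k)%nat) n = 1.

Lemma h_pos n : 0 < h n.
Proof. apply (Rlt_le_trans _ (b ^ n)); [apply pow_lt; lra|apply h_lower]. Qed.

(* Cauchy product: by [convolution] every coefficient is [1]. *)
Lemma PSeries_mul_series z : 0 < z < / b ->
  PSeries q z * Series (fun n => h n * z ^ n) = / (1 - z).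
Proof.
  intro Hz. pose proof (inv_bounds_gt_1 b b_gt_1).
  assert (Hqa : ex_series (fun n => Rabs (q n * z ^ n))).
  { apply (ex_series_le (V := R_CompleteNormedModule) _ (fun n => C * z ^ n)).
    - intro n. change (Rabs (Rabs (q n * z ^ n)) <= C * z ^ n).
      rewrite Rabs_Rabsolu, Rabs_mult, (Rabs_pos_eq (z ^ n)) by (apply pow_le; lra).
      apply Rmult_le_compat_r; [apply pow_le; lra|apply q_bounded].
    - exists (C * / (1 - z)). apply (is_series_scal C (fun n => z ^ n) (/ (1 - z))), is_series_geom.
      rewrite Rabs_pos_eq; lra. }
  assert (Hha : ex_series (fun n => Rabs (h n * z ^ n))).
  { apply (ex_series_ext (fun n => h n * z ^ n)); [|now apply h_series].
    intro n. rewrite Rabs_pos_eq; auto. apply Rmult_le_pos; [apply Rlt_le, h_pos|apply pow_le; lra]. }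
  pose proof (is_series_mult _ _ _ _ (Series_correct _ (ex_series_Rabs _ Hqa))
                (Series_correct _ (h_series z Hz)) Hqa Hha) as P.
  unfold PSeries. rewrite <- (is_series_unique _ _ P).
  apply is_series_unique, (is_series_ext (fun n => z ^ n)).
  - intro n. rewrite <- (Rmult_1_r (z ^ n)), <- (convolution n), scal_sum.
    apply sum_eq. intros i Hi. replace (z ^ n) with (z ^ i * z ^ (n - i)).
    + ring.
    + rewrite <- pow_add. f_equal. lia.
  - apply is_series_geom. rewrite Rabs_pos_eq; lra.
Qed.

Lemma geom_le_series z : 0 < z < / b -> / (1 - b * z) <= Series (fun n => h n * z ^ n).
Proof.
  intro Hz. assert (Hbz : 0 <= b * z < 1) by (pose proof (one_sub_mul_pos b z ltac:(lra) Hz); nra).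
  rewrite <- (is_series_unique (fun n => (b * z) ^ n) (/ (1 - b * z))).
  - apply Series_le; [|now apply h_series]. intro n. split; [apply pow_le; lra|].
    rewrite Rpow_mult_distr. apply Rmult_le_compat_r; [apply pow_le; lra|auto].
  - apply is_series_geom. rewrite Rabs_pos_eq; lra.
Qed.

Lemma PSeries_bounds z : 0 < z < / b -> 0 < PSeries q z <= (1 - b * z) / (1 - z).
Proof.
  intro Hz. pose proof (inv_bounds_gt_1 b b_gt_1). pose proof (PSeries_mul_series z Hz) as E.
  pose proof (geom_le_series z Hz) as G. set (Hz' := Series _) in E, G.
  assert (Hbz := one_sub_mul_pos b z ltac:(lra) Hz).
  assert (HH : 0 < Hz') by (eapply Rlt_le_trans; [apply Rinv_0_lt_compat|]; eauto).
  assert (E' : PSeries q z = / (1 - z) / Hz') by (rewrite <- E; field; lra).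
  rewrite E'. split.
  - apply Rdiv_lt_0_compat; auto. apply Rinv_0_lt_compat; lra.
  - assert (/ Hz' <= 1 - b * z).
    { rewrite <- (Rinv_inv (1 - b * z)). apply Rinv_le_contravar; auto.
      now apply Rinv_0_lt_compat. }
    unfold Rdiv. rewrite (Rmult_comm (1 - b * z)).
    apply Rmult_le_compat_l; [apply Rlt_le, Rinv_0_lt_compat; lra|auto].
Qed.

Lemma PSeries_at_inv_rate : PSeries q (/ b) = 0.
Proof.
  pose proof (inv_bounds_gt_1 b b_gt_1).
  apply (continuity_pt_vanish _ (/ b) (b / (1 - / b))); [lra| |].
  - apply PSeries_continuity. eapply Rbar_lt_le_trans; [|apply (CV_radius_ge_1 q C q_bounded)].
    simpl. rewrite Rabs_pos_eq; lra.
  - intros z Hz. destruct (PSeries_bounds z Hz) as [Hpos Hle].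
    rewrite Rabs_pos_eq by lra. eapply Rle_trans; [exact Hle|].
    replace (1 - b * z) with (b * (/ b - z)) by (field; lra). unfold Rdiv.
    rewrite Rmult_assoc, (Rmult_comm (/ b - z)), <- Rmult_assoc.
    apply Rmult_le_compat_r; [lra|]. apply Rmult_le_compat_l; [lra|].
    apply Rinv_le_contravar; lra.
Qed.

End GeneratingFunction.

Lemma char_coef_bound a M : (forall i, 0 <= a i <= M) -> forall n, Rabs (char_coef a n) <= M + 1.
Proof.
  intros Ha [|[|k]]; simpl char_coef.
  - rewrite Rabs_R1. pose proof (Ha 0%nat). lra.
  - rewrite Rabs_Ropp, Rabs_pos_eq; pose proof (Ha 0%nat); lra.
  - rewrite Rabs_mult, pow_1_abs, Rmult_1_l. pose proof (Ha k). pose proof (Ha (S k)).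
    apply Rabs_le. lra.
Qed.

Lemma is_series_char_coef a z s : is_series (fun j => a j * (- z) ^ S j) s ->
  is_series (fun n => char_coef a n * z ^ n) (1 + (1 + z) * s).
Proof.
  intro Hs. set (c := fun j => match j with O => 0 | S k => z * (a k * (- z) ^ S k) end).
  assert (Hc : is_series c (z * s)).
  { apply is_series_decr_1. change (is_series (fun k => z * (a k * (- z) ^ S k)) (z * s - 0)).
    rewrite Rminus_0_r. apply (is_series_scal z _ _ Hs). }
  apply is_series_decr_1. change (is_series (fun k => char_coef a (S k) * z ^ S k)
                                    (1 + (1 + z) * s - 1 * 1)).
  replace (1 + (1 + z) * s - 1 * 1) with (s + z * s) by ring.
  apply (is_series_ext (fun k => a k * (- z) ^ S k + c k)); [|now apply (is_series_plus _ _ _ _ Hs Hc)].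
  intros [|k]; unfold c; simpl char_coef;
    replace (- z) with (-1 * z) by ring; rewrite !Rpow_mult_distr; simpl; ring.
Qed.

Lemma letter_bounds d : alt_lyndon d -> forall i, 0 <= letter d i <= letter d 0%nat.
Proof. intros Hd i. split; [apply pos_INR|apply le_INR, (proj1 Hd)]. Qed.

Lemma is_solution_root d x : alt_lyndon d -> 1 < x ->
  is_solution d x <-> PSeries (char_coef (letter d)) (/ x) = 0.
Proof.
  intros Hd Hx. set (z := / x).
  assert (Hz : 0 < z < 1) by now apply inv_bounds_gt_1.
  assert (Hterms : (fun j => INR (d j) / (- x) ^ S j) = (fun j => letter d j * (- z) ^ S j)).
  { apply functional_extensionality. intro j. unfold letter, Rdiv, z.
    replace (- / x) with (/ - x) by (field; lra). now rewrite pow_inv. }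
  assert (Hs : ex_series (fun j => letter d j * (- z) ^ S j)).
  { apply ex_series_Rabs, (ex_series_le (V := R_CompleteNormedModule) _ (fun j => letter d 0%nat * z ^ j)).
    - intro j. change (Rabs (Rabs (letter d j * (- z) ^ S j)) <= letter d 0%nat * z ^ j).
      destruct (letter_bounds d Hd j). assert (0 <= z ^ j) by (apply pow_le; lra).
      rewrite Rabs_Rabsolu, Rabs_mult, <- RPow_abs, Rabs_Ropp, !Rabs_pos_eq by lra.
      assert (letter d j * z <= letter d 0%nat) by nra.
      simpl. rewrite <- Rmult_assoc. now apply Rmult_le_compat_r.
    - exists (letter d 0%nat * / (1 - z)).
      apply (is_series_scal (letter d 0%nat) (fun j => z ^ j)), is_series_geom.
      rewrite Rabs_pos_eq; lra. }
  pose proof (is_series_unique _ _ (is_series_char_coef _ _ _ (Series_correct _ Hs))) as HQ.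
  unfold PSeries. rewrite HQ. unfold is_solution. rewrite Hterms, <- is_series_Reals.
  split.
  - intros [_ [_ Hsol]]. rewrite (is_series_unique _ _ Hsol). unfold z. field. lra.
  - intro H0. split; [lra|]. split; [lra|].
    replace (- x / (x + 1)) with (Series (fun j => letter d j * (- z) ^ S j)).
    + now apply Series_correct.
    + replace (- x / (x + 1)) with (- / (1 + z)) by (unfold z; field; lra).
      apply (Rmult_eq_reg_l (1 + z)); [|lra].
      rewrite <- Ropp_mult_distr_r, Rinv_r by lra. lra.
Qed.

Theorem proposition3 (d : word) (beta : R) :
  alt_lyndon d ->
  Un_cv (fun n => ln (INR (factor_count d (S n))) / INR (S n)) (ln beta) ->
  ln beta > 0 ->
  is_solution d beta /\ (forall x : R, is_solution d x -> x <= beta).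
Proof.
  intros Hd Hrate Hln.
  assert (Hb : 1 < beta) by now apply ln_pos_gt_1.
  set (h n := INR (nadm d n)).
  assert (h_ge_1 : forall n, 1 <= h n) by (intro n; apply (le_INR 1), nadm_pos, Hd).
  assert (h_rate : Un_cv (fun n => ln (h (S n)) / INR (S n)) (ln beta)).
  { intros eps He. destruct (Hrate eps He) as [N HN]. exists N. intros n Hn.
    unfold h. rewrite <- factor_count_nadm by exact Hd. now apply HN. }
  assert (h_lower : forall n, beta ^ n <= h n).
  { intro n. apply (submult_pow_le h beta h_ge_1 h_rate); [|lra].
    intros m k. unfold h. rewrite <- mult_INR. apply le_INR, nadm_add. }
  assert (h_series : forall z, 0 < z < / beta -> ex_series (fun n => h n * z ^ n))
    by (intros z Hz; apply (ex_series_rate h beta); auto; lra).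
  pose proof (char_coef_bound _ _ (letter_bounds d Hd)) as q_bounded.
  pose proof (fun n => nadm_convolution d n Hd) as conv.
  split.
  - apply is_solution_root; auto.
    exact (PSeries_at_inv_rate _ h _ _ Hb q_bounded h_lower h_series conv).
  - intros x Hx. apply Rnot_lt_le. intro Hxb. apply is_solution_root in Hx; [|auto|lra].
    assert (Hz : 0 < / x < / beta) by (split; [apply Rinv_0_lt_compat|apply Rinv_lt_contravar]; nra).
    pose proof (PSeries_bounds _ h _ _ Hb q_bounded h_lower h_series conv (/ x) Hz). lra.
Qed.
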